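(* Let $\alpha > 1$ and let $H$ be a $k$-uniform hypergraph with $e$ edges. Then $\lambda_\alpha(H) \le (k!\,e)^{1-1/\alpha}$.
   Context: For a $k$-uniform hypergraph $H$ on $[n]$, $\tau_H(x,\dots,x) = k!\sum_{\{i_1,\dots,i_k\}\in E(H)} x_{i_1}\cdots x_{i_k}$ for $x\in\mathbb{R}^n$, and $\lambda_\alpha(H) = \max\{\tau_H(x,\dots,x) : \|x\|_\alpha = 1\}$, where $\|x\|_\alpha = (\sum_i |x_i|^\alpha)^{1/\alpha}$. *)

From HB Require Import structures.
From mathcomp Require Import all_boot all_order all_algebra.
From mathcomp Require Import all_classical all_reals all_analysis.
Set Implicit Arguments. Unset Strict Implicit. Unset Printing Implicit Defensive.
Import Order.TTheory GRing.Theory Num.Theory.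
Local Open Scope classical_set_scope.
Local Open Scope ring_scope.

Definition k_uniform (n k : nat) (E : {set {set 'I_n}}) : Prop :=
  forall A, A \in E -> #|A| = k.

Definition tauH (R : realType) (n k : nat) (E : {set {set 'I_n}})
  (x : 'I_n -> R) : R :=
  (k`!)%:R * \sum_(A in E) \prod_(i in A) x i.

Definition alpha_norm (R : realType) (n : nat) (alpha : R) (x : 'I_n -> R) : R :=
  (\sum_(i < n) `|x i| `^ alpha) `^ (alpha^-1).

(* lambda_alpha(H) = max { tau_H(x) : ||x||_alpha = 1 } (taken as the sup,
   which is the max since the set is attained on a compact sphere) *)
Definition lambda_alpha (R : realType) (n k : nat) (E : {set {set 'I_n}})
  (alpha : R) : R :=
  sup [set tauH k E x | x in [set x : 'I_n -> R | alpha_norm alpha x = 1]].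

(* Put z_i := |x_i|^alpha, so that sum_i z_i = 1 on the unit sphere. Expanding (sum_i z_i)^k
   gives k! e_k(z) <= 1, hence k! sum_{A in E} prod_{i in A} z_i <= 1. With
   y_A := prod_{i in A} |x_i| we have y_A^alpha = prod_{i in A} z_i, and the power-mean
   inequality sum_A y_A <= e^(1 - 1/alpha) (sum_A y_A^alpha)^(1/alpha), a consequence of Young's
   inequality, yields tau_H(x) <= k! sum_A y_A <= (k! e)^(1 - 1/alpha). *)

From HB Require Import structures.
From mathcomp Require Import all_boot all_order all_algebra.
From mathcomp Require Import all_classical all_reals all_analysis.
Set Implicit Arguments. Unset Strict Implicit. Unset Printing Implicit Defensive.

Import Order.TTheory GRing.Theory Num.Theory.
Local Open Scope classical_set_scope.
Local Open Scope ring_scope.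

Definition elem_sym (R : numDomainType) (I : finType) (z : I -> R) (k : nat) : R :=
  \sum_(A : {set I} | #|A| == k) \prod_(i in A) z i.

Section ElementarySymmetric.
Variables (R : numDomainType) (I : finType) (z : I -> R).
Hypothesis z_ge0 : forall i, 0 <= z i.

(* A |-> A :\ i injects the (k+1)-sets containing i into the k-sets. *)
Lemma sum_prod_setD1_le (k : nat) (i : I) :
  \sum_(A : {set I} | (#|A| == k.+1) && (i \in A)) \prod_(j in A :\ i) z j <= elem_sym z k.
Proof.
rewrite (reindex_onto (fun B => i |: B) (fun A => A :\ i)) /=; last first.
  by move=> A /andP[_ iA]; rewrite finset.setD1K.
rewrite /elem_sym [X in _ <= X]big_mkcond [X in X <= _]big_mkcond /=.
apply: ler_sum => B _; case: ifP => [/andP[/andP[cardiB _] /eqP iBK]|_]; last first.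
  by case: ifP => // _; exact: prodr_ge0.
have iNB : i \notin B by rewrite -iBK setD11.
by move: cardiB; rewrite cardsU1 iNB add1n eqSS => ->; rewrite iBK.
Qed.

Lemma elem_symS_le (k : nat) :
  k.+1%:R * elem_sym z k.+1 <= (\sum_i z i) * elem_sym z k.
Proof.
have expand_prod (A : {set I}) : #|A| = k.+1 ->
    k.+1%:R * \prod_(i in A) z i = \sum_(i in A) z i * \prod_(j in A :\ i) z j.
  move=> cardA; rewrite mulr_natl -cardA -sumr_const.
  by apply: eq_bigr => i iA; rewrite (big_setD1 i iA).
rewrite /elem_sym mulr_sumr (eq_bigr _ (fun A cardA => expand_prod A (eqP cardA))).
rewrite (exchange_big_dep predT) //= mulr_suml.
apply: ler_sum => i _; rewrite -mulr_sumr ler_wpM2l //.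
exact: sum_prod_setD1_le.
Qed.

Lemma fact_elem_sym_le (k : nat) : k`!%:R * elem_sym z k <= (\sum_i z i) ^+ k.
Proof.
elim: k => [|k IHk].
  rewrite /elem_sym (eq_bigl (pred1 (finset.set0 : {set I}))) => [|A]; last by rewrite /= cards_eq0.
  by rewrite big_pred1_eq finset.big_set0 fact0 mul1r expr0.
rewrite factS natrM -mulrA mulrCA exprS.
apply: le_trans (ler_wpM2l (ler0n _ _) (elem_symS_le k)) _.
by rewrite mulrCA ler_wpM2l // sumr_ge0.
Qed.

End ElementarySymmetric.

Section PowerMean.
Variable R : realType.

Lemma powR_prod (I : finType) (P : {pred I}) (f : I -> R) (r : R) :
  (forall i, 0 <= f i) -> (\prod_(i in P) f i) `^ r = \prod_(i in P) f i `^ r.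
Proof.
move=> f_ge0.
suff [] : 0 <= \prod_(i in P) f i /\ (\prod_(i in P) f i) `^ r = \prod_(i in P) f i `^ r by [].
apply: (big_ind2 (fun a b => 0 <= a /\ a `^ r = b)) => [|a1 b1 a2 b2 [a1_ge0 <-] [a2_ge0 <-]|//].
  by rewrite powR1.
by rewrite powRM // mulr_ge0.
Qed.

Lemma sum_le_card_powR (I : finType) (P : {pred I}) (y : I -> R) (p : R) :
  1 < p -> (forall i, 0 <= y i) ->
  \sum_(i in P) y i <= #|P|%:R `^ (1 - p^-1) * (\sum_(i in P) y i `^ p) `^ p^-1.
Proof.
move=> p_gt1 y_ge0; have p_gt0 : 0 < p := lt_trans ltr01 p_gt1.
set m : R := #|P|%:R; set S := \sum_(i in P) y i `^ p.
have [S_gt0|] := ltP 0 S; last first.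
  rewrite le_eqVlt ltNge sumr_ge0 ?orbF => [/eqP S0|i _]; last exact: powR_ge0.
  rewrite big1 ?mulr_ge0 ?powR_ge0 // => i Pi.
  exact: (powR_eq0_eq0 (psumr_eq0P (fun j _ => powR_ge0 (y j) p) S0 Pi)).
have m_gt0 : 0 < m.
  rewrite ltr0n lt0n; apply: contraTneq S_gt0 => P0.
  by rewrite /S big_pred0 ?ltxx // => i; rewrite (card0_eq P0).
(* Young's inequality y c <= (y c)^p / p + 1 / q summed over P, for the scaling c that
   makes the right-hand side equal to m. *)
set c := (m / S) `^ p^-1.
have c_gt0 : 0 < c by rewrite powR_gt0 // divr_gt0.
have cp : c `^ p = m / S.
  by rewrite -powRrM mulVf ?gt_eqF // powRr1 // ltW // divr_gt0.
have q_gt0 : 0 < (1 - p^-1)^-1 by rewrite invr_gt0 subr_gt0 invf_lt1.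
have pq : p^-1 + (1 - p^-1)^-1^-1 = 1 by rewrite invrK addrC subrK.
have young i : y i * c <= (y i * c) `^ p / p + (1 - p^-1).
  have := conjugate_powR (mulr_ge0 (y_ge0 i) (ltW c_gt0)) ler01 p_gt0 q_gt0 pq.
  by rewrite mulr1 powR1 div1r invrK.
have cS : c * \sum_(i in P) y i <= m.
  rewrite mulr_sumr; under eq_bigr do rewrite mulrC.
  apply: le_trans (ler_sum _ (fun i _ => young i)) _.
  rewrite big_split /= -mulr_suml sumr_const.
  under eq_bigr do rewrite powRM ?(ltW c_gt0) // mulrC.
  rewrite -mulr_sumr cp mulfVK ?gt_eqF // -mulr_natr.
  by rewrite -/m mulrBl mul1r [p^-1 * m]mulrC addrC subrK.
rewrite -(ler_pM2l c_gt0); apply: le_trans cS _.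
rewrite mulrCA -powRM ?(ltW S_gt0) ?divr_ge0 ?(ltW m_gt0) ?(ltW S_gt0) //.
rewrite mulfVK ?gt_eqF // -powRD ?subrK ?powRr1 ?(ltW m_gt0) //.
by rewrite oner_eq0.
Qed.

End PowerMean.

Lemma ge0_ge_sup (R : realType) (E : set R) (x : R) : 0 <= x -> ubound E x -> sup E <= x.
Proof.
move=> x_ge0 Ex; have [E_ne0|E0] := pselect (E !=set0); first exact: ge_sup.
suff -> : E = set0 by rewrite sup0.
by apply/seteqP; split=> [y Ey|y //]; apply: E0; exists y.
Qed.

Lemma alpha_norm_eq1 (R : realType) (n : nat) (alpha : R) (x : 'I_n -> R) :
  0 < alpha -> alpha_norm alpha x = 1 -> \sum_i `|x i| `^ alpha = 1.
Proof.
rewrite /alpha_norm => alpha_gt0 /(congr1 (fun t : R => t `^ alpha)) /=.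
by rewrite -powRrM mulVf ?gt_eqF // powR1 powRr1 // sumr_ge0 // => i _; exact: powR_ge0.
Qed.

Lemma tauH_le_sum_norm (R : realType) (n k : nat) (E : {set {set 'I_n}}) (x : 'I_n -> R) :
  tauH k E x <= k`!%:R * \sum_(A in E) \prod_(i in A) `|x i|.
Proof.
rewrite /tauH ler_wpM2l // ler_sum // => A _.
by rewrite -normr_prod ler_norm.
Qed.

Lemma uniform_sum_le_elem_sym (R : numDomainType) (n k : nat) (E : {set {set 'I_n}})
    (z : 'I_n -> R) :
  (forall i, 0 <= z i) -> k_uniform k E ->
  \sum_(A in E) \prod_(i in A) z i <= elem_sym z k.
Proof.
move=> z_ge0 unifE.
have -> : \sum_(A in E) \prod_(i in A) z i =
    \sum_(A : {set 'I_n} | (#|A| == k) && (A \in E)) \prod_(i in A) z i.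
  by apply: eq_bigl => A; case: (boolP (A \in E)) => [/unifE ->|]; rewrite ?eqxx ?andbF.
rewrite /elem_sym [X in _ <= X](bigID (mem E)) /= lerDl.
by rewrite sumr_ge0 // => A _; exact: prodr_ge0.
Qed.

Lemma mulr_powR_invr (R : realType) (a b s : R) : 0 < a -> 0 <= b ->
  a * (b `^ (1 - s) * a^-1 `^ s) = (a * b) `^ (1 - s).
Proof.
move=> a_gt0 b_ge0; have a_ge0 := ltW a_gt0.
rewrite powRM // mulrCA mulrC -powR_inv1 // -powRrM mulN1r -{1}(powRr1 a_ge0).
by rewrite -powRD // lt0r_neq0 ?implybT.
Qed.

Theorem lemma5 (R : realType) (n k : nat) (E : {set {set 'I_n}}) (alpha : R) :
  1 < alpha -> k_uniform k E ->
  lambda_alpha k E alpha <= ((k`!)%:R * (#|E|)%:R) `^ (1 - alpha^-1).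
Proof.
move=> alpha_gt1 unifE; have alpha_gt0 : 0 < alpha := lt_trans ltr01 alpha_gt1.
apply: ge0_ge_sup => [|_ [x /= /(alpha_norm_eq1 alpha_gt0) z_sum1 <-]]; first exact: powR_ge0.
have kf_gt0 : 0 < k`!%:R :> R by rewrite ltr0n fact_gt0.
set z := fun i => `|x i| `^ alpha; have z_ge0 i : 0 <= z i := powR_ge0 _ _.
have edges_le : \sum_(A in E) (\prod_(i in A) `|x i|) `^ alpha <= (k`!%:R)^-1.
  have sym_le1 : k`!%:R * elem_sym z k <= 1.
    by have := fact_elem_sym_le z_ge0 k; rewrite z_sum1 expr1n.
  rewrite -(ler_pM2l kf_gt0) mulfV ?gt_eqF //; apply: le_trans sym_le1.
  have prod_z (A : {set 'I_n}) : (\prod_(i in A) `|x i|) `^ alpha = \prod_(i in A) z i.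
    by rewrite powR_prod.
  rewrite ler_wpM2l ?ler0n // (eq_bigr _ (fun A _ => prod_z A)).
  exact: uniform_sum_le_elem_sym.
apply: le_trans (tauH_le_sum_norm k E x) _.
rewrite -(mulr_powR_invr alpha^-1 kf_gt0 (ler0n _ #|E|)) ler_wpM2l ?ler0n //.
apply: le_trans (sum_le_card_powR _ alpha_gt1 _) _ => [A|]; first exact: prodr_ge0.
rewrite ler_wpM2l ?powR_ge0 //; apply: ge0_ler_powR => //.
- by rewrite invr_ge0 ltW.
- by rewrite nnegrE sumr_ge0 // => A _; exact: powR_ge0.
- by rewrite nnegrE invr_ge0 ler0n.
Qed.
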